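(* Let $H$ be a self-adjoint complex $2\times2$ matrix and let $L_1,L_2,L_3$ be self-adjoint complex $2\times 2$ matrices, $L_j=\begin{pmatrix} l^{00}_j & l^{01}_j\\ \overline{l^{01}_j} & l^{11}_j\end{pmatrix}$ with $l^{00}_j,l^{11}_j\in\mathbb{R}$, $l^{01}_j\in\mathbb{C}$. Define the vectors $L^0,L^1,L^\delta,L^R,L^I\in\mathbb{R}^3$ by their coordinates $L^0_j=l^{00}_j$, $L^1_j=l^{11}_j$, $L^\delta_j=(l^{11}_j-l^{00}_j)/2$, $L^R_j=\mathrm{Re}\,l^{01}_j$, $L^I_j=\mathrm{Im}\,l^{01}_j$, $j=1,2,3$. Consider the stochastic differential equation for a complex process $w$, with $W=(1,w)$, \[ dw=i[w(HW)_0-(HW)_1]\,dt+\frac12\sum_{j=1}^3[w(L_j^*L_jW)_0-(L_j^*L_jW)_1]\,dt+\sum_{j=1}^3[w(L_jW)_0^2-(L_jW)_0(L_jW)_1]\,dt+\sum_{j=1}^3[(L_jW)_1-w(L_jW)_0]\,dY^j_t, \] where $Y=(Y^1,Y^2,Y^3)$ is a standard three-dimensional Wiener process, and its diffusion operator (generator) acting on functions $S(x,y)$, $w=x+iy$. (i) The second order part of this diffusion operator is isothermic, i.e. has the form $\omega(x,y)\big(\frac{\partial^2S}{\partial x^2}+\frac{\partial^2S}{\partial y^2}\big)$ with some positive function $\omega$, if and only if the vectors $L^\delta,L^R,L^I$ form an orthonormal basis of $\mathbb{R}^3$ up to a common constant multiplier. In this case the second order part coincides, up to a constant multiplier, with $(1+x^2+y^2)^2\big(\frac{\partial^2S}{\partial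 x^2}+\frac{\partial^2S}{\partial y^2}\big)$ (the Laplace–Beltrami operator of the sphere in stereographic coordinates). (ii) For $H=0$, the whole diffusion operator is isothermic (i.e. of the form in (i) with all first order terms vanishing) if and only if $L^\delta,L^R,L^I$ form an orthonormal basis of $\mathbb{R}^3$ up to a common constant multiplier and $L^0=-L^1$. Moreover, under these conditions this diffusion operator coincides with the diffusion operator of the same equation rewritten in terms of the innovation process $dB^j_t=dY^j_t-\langle L_j+L_j^*\rangle_W\,dt$ (with $B$ treated as a standard three-dimensional Wiener process).
   Context: For a vector $v\in\mathbb{C}^2$, $(v)_0,(v)_1$ denote its two coordinates; for a matrix $A$, $\langle A\rangle_W=(W,AW)/(W,W)$ with the standard Hermitian inner product. This SDE is the quantum filtering (Belavkin) equation for a qubit with Hamiltonian $H$ and coupling operators $L_j$, written in the projective coordinate $w=\chi_1/\chi_0$. *)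

From HB Require Import structures.
From mathcomp Require Import all_boot all_order all_algebra.
From mathcomp Require Import complex.
Set Implicit Arguments. Unset Strict Implicit. Unset Printing Implicit Defensive.
Import Order.TTheory GRing.Theory Num.Theory.
Local Open Scope ring_scope.

Section QF.
Variable R : rcfType.
Local Notation C := R[i].

Definition c0 (v : 'cV[C]_2) : C := v ord0 ord0.
Definition c1 (v : 'cV[C]_2) : C := v ord_max ord0.

Definition adj (A : 'M[C]_2) : 'M[C]_2 := (map_mx (@conjc R) A)^T.
Definition selfadj (A : 'M[C]_2) : Prop := adj A = A.

Definition Wvec (w : C) : 'cV[C]_2 := \col_(i < 2) (if i == ord0 then 1 else w).

Definition hdot (u v : 'cV[C]_2) : C := \sum_(i < 2) conjc (u i ord0) * v i ord0.
Definition expect (A : 'M[C]_2) (W : 'cV[C]_2) : C := hdot W (A *m W) / hdot W W.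

Definition drift (H : 'M[C]_2) (L : 'I_3 -> 'M[C]_2) (w : C) : C :=
  let W := Wvec w in
  'i%C * (w * c0 (H *m W) - c1 (H *m W))
  + 2^-1 * \sum_(j < 3) (w * c0 ((adj (L j) *m L j) *m W) - c1 ((adj (L j) *m L j) *m W))
  + \sum_(j < 3) (w * c0 (L j *m W) ^+ 2 - c0 (L j *m W) * c1 (L j *m W)).

Definition sigma (L : 'I_3 -> 'M[C]_2) (j : 'I_3) (w : C) : C :=
  let W := Wvec w in c1 (L j *m W) - w * c0 (L j *m W).

(* drift of the same equation rewritten with the innovation process
   dB^j = dY^j - <L_j + L_j^*>_W dt, i.e. dY^j = dB^j + <L_j + L_j^*>_W dt *)
Definition drift_innov (H : 'M[C]_2) (L : 'I_3 -> 'M[C]_2) (w : C) : C :=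
  drift H L w + \sum_(j < 3) sigma L j w * expect (L j + adj (L j)) (Wvec w).

(* Second order part of the generator of dw = b dt + sum_j s_j dY^j,
   w = x + i y, applied to a function S whose second derivatives at (x,y)
   are Sxx, Sxy, Syy. *)
Definition second_order (L : 'I_3 -> 'M[C]_2) (x y Sxx Sxy Syy : R) : R :=
  2^-1 * \sum_(j < 3)
     (let s := sigma L j (Complex x y) in
      (complex.Re s) ^+ 2 * Sxx + 2 * complex.Re s * complex.Im s * Sxy
      + (complex.Im s) ^+ 2 * Syy).

(* generator with a given drift function b, applied to a function S whose
   first and second derivatives at (x,y) are Sx, Sy, Sxx, Sxy, Syy *)
Definition generator_b (b : C -> C) (L : 'I_3 -> 'M[C]_2)
    (x y Sx Sy Sxx Sxy Syy : R) : R :=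
  complex.Re (b (Complex x y)) * Sx + complex.Im (b (Complex x y)) * Sy
  + second_order L x y Sxx Sxy Syy.

Definition generator H L := generator_b (drift H L) L.
Definition generator_innov H L := generator_b (drift_innov H L) L.

Definition L0v (L : 'I_3 -> 'M[C]_2) (j : 'I_3) : R := complex.Re (L j ord0 ord0).
Definition L1v (L : 'I_3 -> 'M[C]_2) (j : 'I_3) : R := complex.Re (L j ord_max ord_max).
Definition Ldelta (L : 'I_3 -> 'M[C]_2) (j : 'I_3) : R := (L1v L j - L0v L j) / 2.
Definition LRv (L : 'I_3 -> 'M[C]_2) (j : 'I_3) : R := complex.Re (L j ord0 ord_max).
Definition LIv (L : 'I_3 -> 'M[C]_2) (j : 'I_3) : R := complex.Im (L j ord0 ord_max).

Definition dot3 (u v : 'I_3 -> R) : R := \sum_(j < 3) u j * v j.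

Definition orthonormal_upto (u1 u2 u3 : 'I_3 -> R) : Prop :=
  exists c : R, c != 0 /\
    let v k := fun j => (if k == 0%N then u1 j else if k == 1%N then u2 j else u3 j) / c in
    forall k l : 'I_3, dot3 (v k) (v l) = (k == l)%:R.

Definition second_order_isothermic (L : 'I_3 -> 'M[C]_2) : Prop :=
  exists omega : R -> R -> R, (forall x y, 0 < omega x y) /\
    forall x y Sxx Sxy Syy, second_order L x y Sxx Sxy Syy = omega x y * (Sxx + Syy).

Definition generator_isothermic (H : 'M[C]_2) (L : 'I_3 -> 'M[C]_2) : Prop :=
  exists omega : R -> R -> R, (forall x y, 0 < omega x y) /\
    forall x y Sx Sy Sxx Sxy Syy,
      generator H L x y Sx Sy Sxx Sxy Syy = omega x y * (Sxx + Syy).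

End QF.

From HB Require Import structures.
From mathcomp Require Import all_boot all_order all_algebra.
From mathcomp Require Import complex ring lra.
Import Order.TTheory GRing.Theory Num.Theory.
Set Implicit Arguments. Unset Strict Implicit.
Local Open Scope ring_scope.

(* For self-adjoint L_j the diffusion coefficient of dY^j is
   sigma_j(w) = conj(l01_j) + (l11_j - l00_j) w - l01_j w^2, so its real and imaginary
   parts are the inner products of the rows (Ldelta_j, LR_j, LI_j) with two vectors
   e_x(x, y), e_y(x, y) of R^3, tangent to the sphere in stereographic coordinates,
   orthogonal and both of length 1 + x^2 + y^2.  The coefficients of the second-order
   part are therefore G(e_x, e_x), G(e_x, e_y), G(e_y, e_y), where G is the Gram form
   of Ldelta, LR, LI; it is isothermic iff G is a positive multiple of the identity,
   which is read off at w = 0, 1, i.  For such G and H = 0 the drift collapses to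
   - sum_j sigma_j(w) (l00_j + l11_j), which vanishes identically iff L0 + L1 is
   orthogonal to the frame, i.e. L0 = - L1; the innovation correction
   sum_j sigma_j <L_j + L_j^*>_W then pairs e_x, e_y with a vector normal to the sphere
   and vanishes as well. *)

Section ConformalFrames.
Variable R : rcfType.
Implicit Types (u v w m : 'I_3 -> R) (U : 'I_3 -> 'I_3 -> R).

Definition vec3 (a b c : R) : 'I_3 -> R :=
  fun k => if k == 0%N :> nat then a else if k == 1%N :> nat then b else c.

Definition frame3 u v w : 'I_3 -> 'I_3 -> R := fun k j => vec3 (u j) (v j) (w j) k.

Definition comb3 (a : 'I_3 -> R) U : 'I_3 -> R := fun j => \sum_(k < 3) a k * U k j.

Definition conformal_frame U (g : R) : Prop :=
  forall k l, dot3 (U k) (U l) = g * (k == l)%:R.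

Lemma dot3C u v : dot3 u v = dot3 v u.
Proof. by apply: eq_bigr => j _; rewrite mulrC. Qed.

Lemma dot3_divr u v (c : R) :
  dot3 (fun j => u j / c) (fun j => v j / c) = dot3 u v / c ^+ 2.
Proof. by rewrite /dot3 mulr_suml; apply: eq_bigr => j _; rewrite -exprVn; ring. Qed.

Lemma orthonormal_uptoP u v w :
  orthonormal_upto u v w <-> exists2 g, 0 < g & conformal_frame (frame3 u v w) g.
Proof.
split=> [[c [c_neq0 /= orth]] | [g g_gt0 conf]].
  exists (c ^+ 2); first by rewrite exprn_even_gt0.
  move=> k l; have := orth k l; rewrite (dot3_divr (frame3 u v w k)) => <-.
  by rewrite mulrC divfK // expf_neq0.
have sqrt_neq0 : Num.sqrt g != 0 by rewrite sqrtr_eq0 -ltNge.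
exists (Num.sqrt g); split=> //= k l.
by rewrite (dot3_divr (frame3 u v w k)) conf sqr_sqrtr ?ltW // mulrAC divff ?mul1r // gt_eqF.
Qed.

Lemma comb3_frame3 a b c u v w j :
  comb3 (vec3 a b c) (frame3 u v w) j = a * u j + b * v j + c * w j.
Proof. by rewrite /comb3 !big_ord_recr big_ord0 /= add0r. Qed.

Lemma dot3_vec3 a b c a' b' c' :
  dot3 (vec3 a b c) (vec3 a' b' c') = a * a' + b * b' + c * c'.
Proof. by rewrite /dot3 !big_ord_recr big_ord0 /= add0r. Qed.

Lemma dot3_comb3_frame3l a b c u v w m :
  dot3 (comb3 (vec3 a b c) (frame3 u v w)) m = a * dot3 u m + b * dot3 v m + c * dot3 w m.
Proof.
rewrite /dot3 !mulr_sumr -!big_split /=; apply: eq_bigr => j _.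
by rewrite comb3_frame3; ring.
Qed.

Lemma dot3_comb3_conformal U g a b :
  conformal_frame U g -> dot3 (comb3 a U) (comb3 b U) = g * dot3 a b.
Proof.
move=> conf; rewrite /dot3 /comb3.
under eq_bigr do rewrite big_distrlr /=.
rewrite exchange_big /=.
under eq_bigr do rewrite exchange_big /=.
transitivity (\sum_(k < 3) \sum_(l < 3) a k * b l * (g * (k == l)%:R)).
  apply: eq_bigr => k _; apply: eq_bigr => l _; rewrite -conf /dot3 mulr_sumr.
  by apply: eq_bigr => j _; ring.
rewrite mulr_sumr; apply: eq_bigr => k _.
rewrite (bigD1 k) //= big1 => [|l /negbTE]; last by rewrite eq_sym => ->; rewrite !mulr0.
by rewrite eqxx addr0 mulr1 mulrC.
Qed.

Lemma conformal_frame3 u v w g :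
  dot3 u u = g -> dot3 v v = g -> dot3 w w = g ->
  dot3 u v = 0 -> dot3 u w = 0 -> dot3 v w = 0 -> conformal_frame (frame3 u v w) g.
Proof.
move=> uu vv ww uv uw vw.
case=> [[|[|[|k]]] hk] //; case=> [[|[|[|l]]] hl] //; rewrite /= ?mulr1 ?mulr0 //;
  by rewrite ?(dot3C v u) ?(dot3C w u) ?(dot3C w v).
Qed.

Lemma conformal_frame_ker U g m :
  g != 0 -> conformal_frame U g -> (forall k, dot3 (U k) m = 0) -> forall j, m j = 0.
Proof.
move=> g_neq0 conf orth j.
pose M : 'M[R]_3 := \matrix_(k, i) U k i.
pose x : 'cV[R]_3 := \col_i m i.
have M_inv : M *m (g^-1 *: M^T) = 1%:M.
  apply/matrixP => k l; rewrite -scalemxAr !mxE.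
  transitivity (g^-1 * dot3 (U k) (U l)).
    by congr (_ * _); apply: eq_bigr => i _; rewrite !mxE.
  by rewrite conf mulKf.
have Mx : M *m x = 0.
  apply/matrixP => k l; rewrite !mxE; transitivity (dot3 (U k) m); last exact: orth.
  by apply: eq_bigr => i _; rewrite !mxE.
have : x = 0 by rewrite -[x]mul1mx -(mulmx1C M_inv) -mulmxA Mx mulmx0.
by move/matrixP => /(_ j ord0); rewrite !mxE.
Qed.

End ConformalFrames.

Section Coordinates.
Variable R : rcfType.
Local Open Scope complex_scope.

Lemma sum_ord2 (V : nmodType) (F : 'I_2 -> V) : \sum_(i < 2) F i = F ord0 + F ord_max.
Proof. by rewrite big_ord_recr big_ord1; congr (F _ + _); apply: val_inj. Qed.

Lemma c0M (A : 'M[R[i]]_2) v : c0 (A *m v) = A ord0 ord0 * c0 v + A ord0 ord_max * c1 v.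
Proof. by rewrite /c0 /c1 mxE sum_ord2. Qed.

Lemma c1M (A : 'M[R[i]]_2) v : c1 (A *m v) = A ord_max ord0 * c0 v + A ord_max ord_max * c1 v.
Proof. by rewrite /c0 /c1 mxE sum_ord2. Qed.

Lemma c0W (w : R[i]) : c0 (Wvec w) = 1. Proof. by rewrite /c0 mxE. Qed.

Lemma c1W (w : R[i]) : c1 (Wvec w) = w. Proof. by rewrite /c1 mxE. Qed.

Lemma hdotE (u v : 'cV[R[i]]_2) : hdot u v = (c0 u)^* * c0 v + (c1 u)^* * c1 v.
Proof. by rewrite /hdot /c0 /c1 sum_ord2. Qed.

Lemma selfadj_diag (A : 'M[R[i]]_2) i : selfadj A -> A i i = (complex.Re (A i i))%:C.
Proof.
move=> /(congr1 (fun B : 'M[R[i]]_2 => B i i)); rewrite /adj !mxE.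
by case: (A i i) => a b [] b0; congr Complex; lra.
Qed.

Lemma selfadj_sym (A : 'M[R[i]]_2) : selfadj A -> A ord_max ord0 = (A ord0 ord_max)^*.
Proof. by rewrite /selfadj => sa; rewrite -{1}sa /adj !mxE. Qed.

Lemma sum_mulc (a b c d : 'I_3 -> R) :
  \sum_(j < 3) (a j +i* b j) * (c j +i* d j) = (dot3 a c - dot3 b d) +i* (dot3 a d + dot3 b c).
Proof. rewrite /dot3 !big_ord_recr !big_ord0 /= !add0r; simpc; congr Complex; ring. Qed.

Lemma sum_mul_realc (a b k : 'I_3 -> R) :
  \sum_(j < 3) (a j +i* b j) * (k j)%:C = dot3 a k +i* dot3 b k.
Proof. rewrite /dot3 !big_ord_recr !big_ord0 /= !add0r; simpc; congr Complex; ring. Qed.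

Lemma complex_eq0 (a b : R) : a = 0 -> b = 0 -> a +i* b = 0.
Proof. by move=> -> ->. Qed.

End Coordinates.

Section Diffusion.
Variable R : rcfType.
Local Open Scope complex_scope.

(* (1 + x^2 + y^2)^2 / 2 times the partial derivatives in x and y of the inverse
   stereographic projection (x, y) |-> (2x, 2y, x^2 + y^2 - 1) / (1 + x^2 + y^2),
   in the coordinates (Z, X, -Y). *)
Definition tangent_re (x y : R) : 'I_3 -> R := vec3 (2 * x) (1 - x ^+ 2 + y ^+ 2) (2 * x * y).
Definition tangent_im (x y : R) : 'I_3 -> R := vec3 (2 * y) (- 2 * x * y) (- (1 + x ^+ 2 - y ^+ 2)).

Variables (L : 'I_3 -> 'M[R[i]]_2) (hL : forall j, selfadj (L j)).

Local Notation U := (frame3 (Ldelta L) (LRv L) (LIv L)).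

Lemma entry00 j : L j ord0 ord0 = (L0v L j)%:C.
Proof. exact: selfadj_diag (hL j). Qed.

Lemma entry11 j : L j ord_max ord_max = (L1v L j)%:C.
Proof. exact: selfadj_diag (hL j). Qed.

Lemma entry01 j : L j ord0 ord_max = LRv L j +i* LIv L j.
Proof. by rewrite /LRv /LIv; case: (L j _ _). Qed.

Lemma entry10 j : L j ord_max ord0 = LRv L j -i* LIv L j.
Proof. by rewrite selfadj_sym ?entry01. Qed.

Lemma sigmaE j x y :
  sigma L j (Complex x y) = comb3 (tangent_re x y) U j +i* comb3 (tangent_im x y) U j.
Proof.
rewrite /sigma c0M c1M c0W c1W entry00 entry11 entry01 entry10 !comb3_frame3 /Ldelta.
by simpc; congr Complex; field.
Qed.

Local Notation sigma_re x y := (comb3 (tangent_re x y) U).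
Local Notation sigma_im x y := (comb3 (tangent_im x y) U).

Lemma second_orderE x y Sxx Sxy Syy :
  second_order L x y Sxx Sxy Syy =
  (dot3 (sigma_re x y) (sigma_re x y) * Sxx + 2 * dot3 (sigma_re x y) (sigma_im x y) * Sxy
   + dot3 (sigma_im x y) (sigma_im x y) * Syy) / 2.
Proof.
rewrite /second_order; under eq_bigr do rewrite sigmaE /=.
by rewrite /dot3 !big_ord_recr !big_ord0 /=; field.
Qed.

Lemma second_order_conformal g : conformal_frame U g -> forall x y Sxx Sxy Syy,
  second_order L x y Sxx Sxy Syy = g / 2 * (1 + x ^+ 2 + y ^+ 2) ^+ 2 * (Sxx + Syy).
Proof.
move=> conf x y Sxx Sxy Syy.
by rewrite second_orderE !(dot3_comb3_conformal _ _ conf) !dot3_vec3; field.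
Qed.

Lemma conformal_isothermic g : 0 < g -> conformal_frame U g -> second_order_isothermic L.
Proof.
move=> g_gt0 conf; exists (fun x y => g / 2 * (1 + x ^+ 2 + y ^+ 2) ^+ 2); split.
  by move=> x y; rewrite !mulr_gt0 ?exprn_gt0 ?invr_gt0 //; nra.
exact: second_order_conformal.
Qed.

Lemma isothermic_conformal :
  second_order_isothermic L -> exists2 g, 0 < g & conformal_frame U g.
Proof.
case=> om [om_gt0 iso].
have tests x y : [/\ dot3 (sigma_re x y) (sigma_re x y) = dot3 (sigma_im x y) (sigma_im x y),
    dot3 (sigma_re x y) (sigma_im x y) = 0 & 0 < dot3 (sigma_re x y) (sigma_re x y)].
  have := om_gt0 x y; have := iso x y 1 0 0; have := iso x y 0 1 0; have := iso x y 0 0 1.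
  rewrite !second_orderE => *; split; lra.
have [eq00 orth00 pos00] := tests 0 0.
have [eq10 orth10 _] := tests 1 0.
have [eq01 orth01 _] := tests 0 1.
move: eq00 orth00 pos00 eq10 orth10 eq01 orth01.
rewrite /tangent_re /tangent_im !dot3_comb3_frame3l ![dot3 _ (comb3 _ _)]dot3C !dot3_comb3_frame3l.
rewrite (dot3C (LRv L) (Ldelta L)) (dot3C (LIv L) (Ldelta L)) (dot3C (LIv L) (LRv L)).
rewrite !expr0n !expr1n /= => *; exists (dot3 (LRv L) (LRv L)); first lra.
apply: conformal_frame3; lra.
Qed.

Lemma drift0E w : drift 0 L w = - \sum_(j < 3) sigma L j w *
  ((L j ord0 ord0 + L j ord_max ord_max) / 2 + c0 (L j *m Wvec w)).
Proof.
rewrite /drift mul0mx [c0 0]mxE [c1 0]mxE mulr0 subrr mulr0 add0r.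
rewrite mulr_sumr -big_split -sumrN; apply: eq_bigr => j _ /=.
by rewrite hL -mulmxA /sigma !(c0M, c1M, c0W, c1W); ring.
Qed.

Lemma drift0_conformal g x y : conformal_frame U g ->
  drift 0 L (Complex x y) = - \sum_(j < 3) sigma L j (Complex x y) * (L0v L j + L1v L j)%:C.
Proof.
move=> conf; rewrite drift0E.
have half : (2^-1 : R[i]) = (2^-1)%:C by rewrite fmorphV rmorph_nat.
have weight_split j : (L j ord0 ord0 + L j ord_max ord_max) / 2 + c0 (L j *m Wvec (Complex x y))
    = (L0v L j + L1v L j)%:C + (comb3 (vec3 (-1) x (- y)) U j +i* comb3 (vec3 0 y x) U j).
  rewrite c0M c0W c1W entry00 entry11 entry01 !comb3_frame3 /Ldelta half.
  by simpc; congr Complex; field.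
under eq_bigr do rewrite weight_split mulrDr.
rewrite big_split /= [X in - (_ + X)](_ : _ = 0) ?addr0 //.
under eq_bigr do rewrite sigmaE.
rewrite sum_mulc !(dot3_comb3_conformal _ _ conf) !dot3_vec3 /tangent_re /tangent_im.
by apply: complex_eq0; ring.
Qed.

Lemma drift0_eq0 g : conformal_frame U g -> (forall j, L0v L j = - L1v L j) ->
  forall x y, drift 0 L (Complex x y) = 0.
Proof.
move=> conf opp x y; rewrite (drift0_conformal _ _ conf) big1 ?oppr0 // => j _.
by rewrite opp addNr mulr0.
Qed.

Lemma drift0_eq0_inv g : 0 < g -> conformal_frame U g ->
  (forall x y, drift 0 L (Complex x y) = 0) -> forall j, L0v L j = - L1v L j.
Proof.
move=> g_gt0 conf drift_eq0.
pose m j := L0v L j + L1v L j.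
have orth x y : dot3 (sigma_re x y) m = 0 /\ dot3 (sigma_im x y) m = 0.
  move: (drift_eq0 x y); rewrite (drift0_conformal _ _ conf).
  under eq_bigr do rewrite sigmaE.
  by rewrite sum_mul_realc => /eqP; rewrite oppr_eq0 eq_complex /= => /andP[/eqP ? /eqP ?].
have [] := orth 0 0; have [+ _] := orth 1 0.
rewrite /tangent_re /tangent_im !dot3_comb3_frame3l !expr0n !expr1n /= => o1 o2 o3.
have delta_m : dot3 (Ldelta L) m = 0 by lra.
have re_m : dot3 (LRv L) m = 0 by lra.
have im_m : dot3 (LIv L) m = 0 by lra.
move=> j; suff : m j = 0 by rewrite /m; lra.
apply: (conformal_frame_ker (lt0r_neq0 g_gt0) conf).
by case=> [[|[|[|k]]] hk].
Qed.

Lemma expect_numeratorE j x y : L0v L j = - L1v L j ->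
  hdot (Wvec (Complex x y)) ((L j + adj (L j)) *m Wvec (Complex x y))
  = (comb3 (vec3 (2 * (x ^+ 2 + y ^+ 2 - 1)) (4 * x) (- 4 * y)) U j)%:C.
Proof.
move=> opp; rewrite hL hdotE c0M c1M c0W c1W !mxE entry00 entry11 entry01 entry10.
by rewrite comb3_frame3 /Ldelta opp; simpc; congr Complex; field.
Qed.

Lemma drift_innov0E g : conformal_frame U g -> (forall j, L0v L j = - L1v L j) ->
  forall x y, drift_innov 0 L (Complex x y) = drift 0 L (Complex x y).
Proof.
move=> conf opp x y; rewrite /drift_innov /expect [X in _ + X](_ : _ = 0) ?addr0 //.
under eq_bigr do rewrite mulrA; rewrite -mulr_suml.
under eq_bigr do rewrite expect_numeratorE // sigmaE.
rewrite sum_mul_realc !(dot3_comb3_conformal _ _ conf) !dot3_vec3 /tangent_re /tangent_im.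
by rewrite complex_eq0 ?mul0r //; ring.
Qed.

End Diffusion.

Lemma generator_isothermicP (R : rcfType) (H : 'M[R[i]]_2) (L : 'I_3 -> 'M[R[i]]_2) :
  generator_isothermic H L <->
  second_order_isothermic L /\ forall x y, drift H L (Complex x y) = 0.
Proof.
split=> [[om [om_gt0 gen]] | [[om [om_gt0 iso]] drift_eq0]].
  have iso x y Sxx Sxy Syy : second_order L x y Sxx Sxy Syy = om x y * (Sxx + Syy).
    by have := gen x y 0 0 Sxx Sxy Syy; rewrite /generator /generator_b !mulr0 !add0r.
  split=> [|x y]; first by exists om.
  have := gen x y 1 0 0 0 0; have := gen x y 0 1 0 0 0; rewrite /generator /generator_b !iso.
  by case: (drift H L _) => a b /= eb ea; apply: complex_eq0; lra.
exists om; split=> // x y Sx Sy Sxx Sxy Syy.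
by rewrite /generator /generator_b drift_eq0 iso /= !mul0r !add0r.
Qed.

Unset Implicit Arguments.

Theorem proposition3p2 (R : rcfType) (H : 'M[R[i]]_2) (L : 'I_3 -> 'M[R[i]]_2)
  (hH : selfadj H) (hL : forall j, selfadj (L j)) :
  (* (i) *)
  ((second_order_isothermic L <->
      orthonormal_upto (Ldelta L) (LRv L) (LIv L))
   /\ (second_order_isothermic L ->
      exists c : R, forall x y Sxx Sxy Syy,
        second_order L x y Sxx Sxy Syy
        = c * (1 + x ^+ 2 + y ^+ 2) ^+ 2 * (Sxx + Syy)))
  /\
  (* (ii), H = 0 *)
  ((generator_isothermic 0 L <->
      (orthonormal_upto (Ldelta L) (LRv L) (LIv L)
       /\ forall j, L0v L j = - L1v L j))
   /\ (orthonormal_upto (Ldelta L) (LRv L) (LIv L) ->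
       (forall j, L0v L j = - L1v L j) ->
       forall x y Sx Sy Sxx Sxy Syy,
         generator 0 L x y Sx Sy Sxx Sxy Syy
         = generator_innov 0 L x y Sx Sy Sxx Sxy Syy)).
Proof.
have iso_iff : second_order_isothermic L <-> orthonormal_upto (Ldelta L) (LRv L) (LIv L).
  rewrite orthonormal_uptoP; split; first exact: isothermic_conformal hL.
  by case=> g g_gt0 conf; exact: conformal_isothermic hL g g_gt0 conf.
split; split.
- exact: iso_iff.
- case/iso_iff/orthonormal_uptoP => g _ conf; exists (g / 2) => x y Sxx Sxy Syy.
  exact: (second_order_conformal hL conf).
- split=> [/generator_isothermicP [/iso_iff ortho drift_eq0] | [ortho opp]].
    split=> //; case/orthonormal_uptoP: ortho => g g_gt0 conf.
    exact: (drift0_eq0_inv hL g_gt0 conf drift_eq0).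
  apply/generator_isothermicP; split; first exact/iso_iff.
  case/orthonormal_uptoP: ortho => g _ conf; exact: (drift0_eq0 hL conf opp).
- case/orthonormal_uptoP => g _ conf opp x y Sx Sy Sxx Sxy Syy.
  by rewrite /generator /generator_innov /generator_b (drift_innov0E hL conf opp).
Qed.
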